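(* Suppose a group $G$ admits a $\mathscr{Z}$-structure $(\overline{X},Z)$. Then $\overline{X}$ is a controlled $\mathscr{Z}$-compactification of $X=\overline{X}- Z$.
   Context: A closed subset $A$ of an ANR $Y$ is a $\mathscr{Z}$-set if there is a homotopy $H:Y\times[0,1]\to Y$ with $H_0=\mathrm{id}_Y$ and $H_t(Y)\subset Y- A$ for every $t>0$. A $\mathscr{Z}$-structure on a group $G$ is a pair of spaces $(\overline{X},Z)$ such that: (1) $\overline{X}$ is a compact AR; (2) $Z$ is a $\mathscr{Z}$-set in $\overline{X}$; (3) $X=\overline{X}- Z$ is a proper metric space (metric $d$) on which $G$ acts properly, cocompactly, by isometries; (4) (nullity condition) for every compact $C\subseteq X$ and every open cover $\mathscr{U}$ of $\overline{X}$, all but finitely many $G$-translates of $C$ lie in some element of $\mathscr{U}$. A controlled $\mathscr{Z}$-compactification of a proper metric space $(X,d)$ is a compactification $\overline{X}=X\cup Z$ (with some metric $\overline{d}$ inducing the topology of $\overline{X}$) such that (i) $Z$ is a $\mathscr{Z}$-set in $\overline{X}$, and (ii) for every $\epsilon>0$ and $R>0$ there is a compact $K\subset X$ such that every ball of radius $R$ in $(X,d)$ not intersecting $K$ has $\overline{d}$-diameter less than $\epsilon$. *)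

From HB Require Import structures.
From mathcomp Require Import all_boot all_order all_algebra.
From mathcomp Require Import all_classical all_reals all_analysis.
From mathcomp Require monoid.
Set Implicit Arguments. Unset Strict Implicit. Unset Printing Implicit Defensive.
Import Order.TTheory GRing.Theory Num.Theory numFieldNormedType.Exports.
Local Open Scope classical_set_scope.
Local Open Scope ring_scope.

Section ZStructures.
Variable R : realType.

Definition is_metric_on (T : Type) (A : set T) (d : T -> T -> R) : Prop :=
  forall x y z, A x -> A y -> A z ->
    [/\ 0 <= d x y, d x y = 0 <-> x = y, d x y = d y x
      & d x z <= d x y + d y z].

Definition dball (T : Type) (A : set T) (d : T -> T -> R) (x : T) (r : R)
  : set T := [set y | A y /\ d x y < r].

Definition induces_topology_on (T : topologicalType) (A : set T)
    (d : T -> T -> R) : Prop :=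
  forall x, A x ->
    (forall U : set T, open U -> U x ->
       exists2 r : R, 0 < r & dball A d x r `<=` U) /\
    (forall r : R, 0 < r ->
       exists U : set T, [/\ open U, U x & U `&` A `<=` dball A d x r]).

Definition metrizable (T : topologicalType) : Prop :=
  exists d : T -> T -> R, is_metric_on setT d /\ induces_topology_on setT d.

Definition embedding (T M : topologicalType) (e : T -> M) : Prop :=
  [/\ continuous e, injective e &
      forall U : set T, open U -> exists2 V : set M, open V & e @^-1` V = U].

Definition closed_embedding (T M : topologicalType) (e : T -> M) : Prop :=
  embedding e /\ closed (range e).

Definition is_AR (T : topologicalType) : Prop :=
  metrizable T /\
  forall (M : topologicalType) (e : T -> M), metrizable M -> closed_embedding e ->
    exists r : M -> T, continuous r /\ forall x, r (e x) = x.

Definition is_ANR (T : topologicalType) : Prop :=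
  metrizable T /\
  forall (M : topologicalType) (e : T -> M), metrizable M -> closed_embedding e ->
    exists U : set M, exists r : M -> T,
      [/\ open U, range e `<=` U, {within U, continuous r} &
          forall x, r (e x) = x].

Definition Zset (T : topologicalType) (A : set T) : Prop :=
  is_ANR T /\ closed A /\
  exists H : T * R -> T,
    [/\ {within [set p : T * R | 0 <= p.2 <= 1], continuous H},
        forall y, H (y, 0) = y &
        forall y (t : R), 0 < t <= 1 -> ~ A (H (y, t))].

Definition diam_lt (T : Type) (dbar : T -> T -> R) (S : set T) (e : R) : Prop :=
  exists2 e' : R, e' < e & forall x y, S x -> S y -> dbar x y <= e'.

Definition proper_metric_on (T : topologicalType) (A : set T) (d : T -> T -> R)
  : Prop :=
  [/\ is_metric_on A d, induces_topology_on A d &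
      forall x (r : R), A x -> compact [set y | A y /\ d x y <= r]].

(* Z-structure on the group G: Xbar = T, boundary Z, X = ~` Z with metric d,
   and the action act of G on X. *)
Definition Zstructure (G : monoid.Group.type) (T : topologicalType) (Z : set T)
    (d : T -> T -> R) (act : G -> T -> T) : Prop :=
  let X := ~` Z in
  [/\ compact [set: T] /\ is_AR T,
      Zset Z,
      proper_metric_on X d &
     [/\
      [/\ forall x, X x -> act (@monoid.one G) x = x,
          forall g h x, X x -> act (monoid.mul g h) x = act g (act h x),
          forall g x, X x -> X (act g x) &
          forall g x y, X x -> X y -> d (act g x) (act g y) = d x y],
      (forall K : set T, compact K -> K `<=` X ->
         finite_set [set g : G | exists2 x, K x & K (act g x)]),
      (exists C : set T, [/\ compact C, C `<=` X &
          X `<=` \bigcup_(g in [set: G]) (act g @` C)]) &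
      forall (C : set T) (UU : set (set T)),
        compact C -> C `<=` X ->
        (forall U, UU U -> open U) -> [set: T] `<=` \bigcup_(U in UU) U ->
        finite_set [set g : G | ~ exists2 U, UU U & act g @` C `<=` U]]].

Definition controlled_Zcompactification (T : topologicalType) (Z : set T)
    (d : T -> T -> R) : Prop :=
  let X := ~` Z in
  [/\ proper_metric_on X d, compact [set: T], closure X = [set: T],
      Zset Z &
      exists dbar : T -> T -> R,
        [/\ is_metric_on setT dbar, induces_topology_on setT dbar &
            forall eps r : R, 0 < eps -> 0 < r ->
              exists K : set T, [/\ compact K, K `<=` X &
                forall x, X x -> dball X d x r `&` K = set0 ->
                  diam_lt dbar (dball X d x r) eps]]].

End ZStructures.

From HB Require Import structures.
From mathcomp Require Import all_boot all_order all_algebra.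
From mathcomp Require Import all_classical all_reals all_analysis.
From mathcomp Require monoid.
From mathcomp Require Import lra.
Import Order.TTheory GRing.Theory Num.Theory numFieldNormedType.Exports.
Local Open Scope classical_set_scope.
Local Open Scope ring_scope.

(* The Z-set homotopy pushes every point of the boundary into X at once, so X
   is dense. For the control condition fix a compact C whose translates cover
   X and a point c0 of C with C inside the d-ball B(c0, M). Every r-ball of X
   lies in some translate g D of the compact ball D = B(c0, M + r). Cover the
   compactum by open sets of dbar-diameter < eps: by nullity all but finitely
   many g D lie in one of them, and the translates g B(c0, M) of the finitely
   many exceptional g form the compact set K. An r-ball about a point of g C
   missing K forces g to be non-exceptional, so the ball is dbar-small. *)

Section ZsetDense.
Context {R : realType} {T : topologicalType} (Z : set T).

Lemma Zset_closureC : @Zset R T Z -> closure (~` Z) = [set: T].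
Proof.
move=> [_ [_ [H [cH H0 HZ]]]].
apply/seteqP; split => // z _ B nB.
have [nZz|Zz] := pselect (~ Z z).
  by exists z; split => //; apply: nbhs_singleton.
have dom_z0 : [set p : T * R | 0 <= p.2 <= 1] (z, 0) by rewrite /= lexx ler01.
move/subspace_continuousP: cH => /(_ _ dom_z0) cz.
rewrite /from_subspace /= H0 in cz.
case: (cz B nB) => -[U V] [/= nU nV] UV.
move/nbhs_ballP: nV => [e /= e0 eV].
pose t := Num.min (e / 2) 1.
have t0 : 0 < t by rewrite lt_min divr_gt0 // ltr01.
have t1 : t <= 1 by rewrite ge_min lexx orbT.
have Vt : V t.
  apply: eV; rewrite /ball /= sub0r normrN gtr0_norm //.
  by rewrite gt_min ltr_pdivrMr // ltr_pMr // ltr1n.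
exists (H (z, t)); split; first by apply: HZ; rewrite t0 t1.
by apply: (UV (z, t)); [split=> //; exact: nbhs_singleton | rewrite /= (ltW t0)].
Qed.

End ZsetDense.

Lemma finite_bigcup_compact (T : topologicalType) (I : choiceType) (F : set I)
    (f : I -> set T) :
  finite_set F -> (forall i, F i -> compact (f i)) ->
  compact (\bigcup_(i in F) f i).
Proof.
move=> /finite_seqP [s ->] cf; rewrite bigcup_seq big_seq.
by apply: bigsetU_compact => i /=; apply: cf.
Qed.

Section MetricFacts.
Context {R : realType} {T : topologicalType}.

Lemma compact_dist_bounded {X C : set T} {d : T -> T -> R} {c0 : T} :
  is_metric_on X d -> induces_topology_on X d -> compact C -> C `<=` X ->
  X c0 -> exists M : R, forall c, C c -> d c0 c <= M.
Proof.
move=> md td cC CX Xc0.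
move/compact_near_coveringP: cC => /(_ R (+oo) (fun M x => X x -> d c0 x <= M)).
case.
  move=> x Cx.
  have [U [oU Ux UX]] := (td x (CX x Cx)).2 1 ltr01.
  exists (U, [set M | d c0 x + 1 < M]).
    split; first exact: open_nbhs_nbhs.
    by exists (d c0 x + 1); split => //; exact: num_real.
  case=> y M /= [Uy xM] Xy.
  have [_ dxy] := UX y (conj Uy Xy).
  have [_ _ _ tri] := md c0 x y Xc0 (CX x Cx) Xy.
  by apply: (le_trans tri); apply: ltW; apply: lt_trans xM; rewrite ltrD2l.
move=> M [_ HM]; exists (M + 1) => c Cc.
by apply: (HM (M + 1)) => //; [rewrite ltrDl ltr01 | exact: CX].
Qed.

Definition small_open_sets (dbar : T -> T -> R) (e : R) : set (set T) :=
  [set U | open U /\ exists z, U `<=` dball setT dbar z e].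

Lemma small_open_sets_open (dbar : T -> T -> R) (e : R) U :
  small_open_sets dbar e U -> open U.
Proof. by case. Qed.

Lemma small_open_sets_cover {dbar : T -> T -> R} {e : R} :
  induces_topology_on setT dbar -> 0 < e ->
  [set: T] `<=` \bigcup_(U in small_open_sets dbar e) U.
Proof.
move=> tb e0 z _; have [U [oU Uz Usub]] := (tb z I).2 e e0.
by exists U => //; split => //; exists z => y Uy; exact: Usub.
Qed.

Lemma sub_dball_diam_lt {dbar : T -> T -> R} {S : set T} {z : T} {e eps : R} :
  is_metric_on setT dbar -> S `<=` dball setT dbar z e -> e + e < eps ->
  diam_lt dbar S eps.
Proof.
move=> mb Sz lt_eps; exists (e + e) => // y1 y2 /Sz[_ zy1] /Sz[_ zy2].
have [_ _ sym tri] := mb y1 z y2 I I I.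
by apply: (le_trans tri); rewrite sym; apply: ltW; apply: ltrD.
Qed.

End MetricFacts.

Section IsometricAction.
Context {R : realType} {G : monoid.Group.type} {T : topologicalType}.
Context {X : set T} {d : T -> T -> R} {act : G -> T -> T}.
Hypothesis act1 : forall x, X x -> act (@monoid.one G) x = x.
Hypothesis actM : forall g h x, X x -> act (monoid.mul g h) x = act g (act h x).
Hypothesis actX : forall g x, X x -> X (act g x).
Hypothesis actI : forall g x y, X x -> X y -> d (act g x) (act g y) = d x y.

Lemma act_invK (g : G) y : X y -> act g (act (monoid.inv g) y) = y.
Proof. by move=> Xy; rewrite -actM // monoid.mulgV act1. Qed.

Lemma dball_act_sub {g : G} {c0 c : T} {M r : R} :
  is_metric_on X d -> X c0 -> X c -> d c0 c <= M ->
  dball X d (act g c) r `<=` act g @` [set y | X y /\ d c0 y <= M + r].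
Proof.
move=> md Xc0 Xc c0c y [Xy dcy].
have Xy' := actX (monoid.inv g) y Xy.
exists (act (monoid.inv g) y); last exact: act_invK.
split=> //; have [_ _ _ tri] := md c0 c _ Xc0 Xc Xy'.
apply: (le_trans tri); apply: lerD => //; apply: ltW.
by rewrite -(actI g) // act_invK.
Qed.

Lemma dball_in_cover_off_compact {r : R} {C : set T} {UU : set (set T)} :
  0 < r -> proper_metric_on X d -> compact C -> C `<=` X ->
  X `<=` \bigcup_(g in [set: G]) (act g @` C) ->
  (forall D, compact D -> D `<=` X ->
     finite_set [set g : G | ~ exists2 U, UU U & act g @` D `<=` U]) ->
  exists K : set T, [/\ compact K, K `<=` X &
    forall x, X x -> dball X d x r `&` K = set0 ->
      exists2 U, UU U & dball X d x r `<=` U].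
Proof.
move=> r0 [md td pd] cC CX XC null.
have [[c0 Cc0]|C0] := pselect (exists c, C c); last first.
  exists set0; split=> //; first exact: compact0.
  by move=> x /XC[g _ [c Cc _]]; exfalso; apply: C0; exists c.
have Xc0 := CX c0 Cc0.
have [M CM] := compact_dist_bounded md td cC CX Xc0.
pose D := [set y | X y /\ d c0 y <= M + r].
pose F := [set g : G | ~ exists2 U, UU U & act g @` D `<=` U].
pose K := \bigcup_(g in F) [set y | X y /\ d (act g c0) y <= M].
exists K; split.
- apply: finite_bigcup_compact => [|g _]; last exact/pd/actX.
  by apply: null; [exact: pd | move=> y []].
- by move=> y [g _ []].
move=> x Xx xK.
have [g _ [c Cc gcx]] := XC x Xx.
have [Fg|/contrapT[U UU_U gDU]] := pselect (F g).
  suff : (dball X d x r `&` K) x by rewrite xK.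
  have [_ [_ dxx0] _ _] := md x x x Xx Xx Xx.
  split; first by split=> //; rewrite dxx0.
  exists g => //; split=> //.
  by rewrite -gcx actI //; [exact: CM | exact: CX].
exists U => //; apply: subset_trans gDU; rewrite -gcx.
exact: dball_act_sub md Xc0 (CX c Cc) (CM c Cc).
Qed.

End IsometricAction.

Theorem lemma12 (R : realType) (G : monoid.Group.type) (T : topologicalType)
    (Z : set T) (d : T -> T -> R) (act : G -> T -> T) :
  @Zstructure R G T Z d act -> @controlled_Zcompactification R T Z d.
Proof.
move=> [[cT [[dbar [mb tb]] _]] zs pm [[a1 aM aX aI] _ [C [cC CX XC]] null]].
split=> //; first exact: Zset_closureC zs.
exists dbar; split=> // eps r e0 r0.
have e30 : 0 < eps / 3 by rewrite divr_gt0.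
have [K [cK KX ballK]] := dball_in_cover_off_compact a1 aM aX aI r0 pm cC CX XC
  (fun D cD DX => null D (small_open_sets dbar (eps / 3)) cD DX
    (@small_open_sets_open _ _ _ _) (small_open_sets_cover tb e30)).
exists K; split=> // x Xx xK.
have [U [_ [z Uz]] xU] := ballK x Xx xK.
by apply: sub_dball_diam_lt mb (subset_trans xU Uz) _; lra.
Qed.
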